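(* If a graph $G$ is $\mathbb{Z}_3$-colorable, then $G$ is $\mathbb{Z}_5$-colorable.
   Context: Graphs are finite, may have multiple edges but no loops. For an Abelian group $\Gamma$, $G$ is $\Gamma$-colorable if for some (equivalently, any) orientation $D$ of $G$ and every $\varphi:E(G)\to\Gamma$ there is $c:V(G)\to\Gamma$ with $c(w)-c(u)\neq\varphi(uw)$ for every directed edge $uw$ of $D$. *)

From mathcomp Require Import all_boot all_order all_algebra.
Set Implicit Arguments. Unset Strict Implicit. Unset Printing Implicit Defensive.
Import GRing.Theory.
Local Open Scope ring_scope.

(* A finite multigraph without loops: finite vertex type V, finite edge
   type E, and each edge e has two endpoints end1 e, end2 e (unordered
   pair; the order in which they are stored carries no meaning). *)
Definition loopless (V E : finType) (end1 end2 : E -> V) : Prop :=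
  forall e, end1 e != end2 e.

Definition tail (V E : finType) (end1 end2 : E -> V) (o : E -> bool) (e : E) : V :=
  if o e then end1 e else end2 e.
Definition head (V E : finType) (end1 end2 : E -> V) (o : E -> bool) (e : E) : V :=
  if o e then end2 e else end1 e.

Definition group_colorable (Gamma : zmodType) (V E : finType) (end1 end2 : E -> V) : Prop :=
  exists o : E -> bool, forall phi : E -> Gamma, exists c : V -> Gamma,
    forall e : E, c (head end1 end2 o e) - c (tail end1 end2 o e) != phi e.

(* A coloring problem over Z_5 is pulled back to one over Z_3 edge by edge.
   Embed Z_3 into Z_5 as {0, 1, 2}: every difference of two such values
   determines the corresponding difference in Z_3 (0, 1, 2, 3, 4 come from
   differences 0, 1, 2, -2, -1).  So for a forbidden value f on an edge,
   forbid its Z_3-shadow instead; a valid Z_3-coloring embedded in Z_5 then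
   avoids every forbidden Z_5-difference. *)

From mathcomp Require Import all_boot all_order all_algebra.
Set Implicit Arguments. Unset Strict Implicit. Unset Printing Implicit Defensive.
Import GRing.Theory.
Local Open Scope ring_scope.

Section DifferenceTransfer.

Variables (G H : zmodType) (embed : G -> H) (shadow : H -> G).
Hypothesis shadow_diff : forall a b, shadow (embed a - embed b) = a - b.

Lemma group_colorable_transfer (V E : finType) (end1 end2 : E -> V) :
  group_colorable G end1 end2 -> group_colorable H end1 end2.
Proof.
move=> [o colG]; exists o => phi.
have [c cP] := colG (shadow \o phi).
exists (embed \o c) => e /=; apply: contra (cP e) => /eqP /= <-.
by rewrite shadow_diff.
Qed.

End DifferenceTransfer.

Definition embed_Z3_Z5 (a : 'Z_3) : 'Z_5 := inZp a.

Definition shadow_Z5_Z3 (f : 'Z_5) : 'Z_3 :=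
  inZp (if (f < 3)%N then val f else (val f - 2)%N).

Lemma shadow_Z5_Z3_diff (a b : 'Z_3) :
  shadow_Z5_Z3 (embed_Z3_Z5 a - embed_Z3_Z5 b) = a - b.
Proof. by case: a b => [[|[|[|?]]] ?] [[|[|[|?]]] ?]; apply: val_inj. Qed.

Theorem proposition7p7 (V E : finType) (end1 end2 : E -> V) :
  loopless end1 end2 ->
  group_colorable 'Z_3 end1 end2 ->
  group_colorable 'Z_5 end1 end2.
Proof. move=> _; exact: (group_colorable_transfer shadow_Z5_Z3_diff). Qed.
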